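(* Let $\mu>0$, $0<\tau^-<\tau^+$, let $k\ge0$ be an integer, and for $\gamma\in(0,\mu)$ let $\tau=\tau(\gamma)\in[\tau^-,\tau^+]$ and let $\omega_k=\omega_k(\gamma)$ satisfy $\omega_k\tau\in((2k+1)\pi,(2k+2)\pi)$. Let $$r_k(\gamma)=\frac{\omega_k^2+\gamma^2}{2\gamma(\gamma-\mu)}.$$ Then for $\gamma\in(0,\mu)$: (1) $|r_k(\gamma)|\ge 2(\omega_k/\mu)^2$; (2) $r_k(\gamma)\to-\infty$ as $\gamma\to0$ or $\gamma\to\mu$; (3) $|r_k(\gamma)|\le\dfrac{(2k+2)^2(\pi/\tau^-)^2+\gamma^2}{2\gamma(\mu-\gamma)}$.
   Context: In the paper, $\tau$ is the state-dependent delay $a/v(\xi)$ at a steady state $\xi$ for a decreasing velocity function $v$ with limiting values $v^->v^+>0$, so that $\tau\in(\tau^-,\tau^+)$ with $\tau^\pm=a/v^\pm$. *)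

From Stdlib Require Import Reals.
From Coquelicot Require Import Coquelicot.
Open Scope R_scope.

Definition r_k (mu : R) (omega : R -> R) (g : R) : R :=
  (omega g ^ 2 + g ^ 2) / (2 * g * (g - mu)).

From Stdlib Require Import Reals Lra.
From Coquelicot Require Import Coquelicot.
Open Scope R_scope.

(* For 0 < g < mu the denominator 2 g (g - mu) is negative, so
   r_k = -(omega^2 + g^2) / (2 g (mu - g)).  Since tau lies in [tau-, tau+],
   omega_k lies in (pi / tau+, (2k+2) pi / tau-).  Part (1) is AM-GM,
   4 g (mu - g) <= mu^2.  For (2), the lower bound on omega_k keeps the
   numerator above c = (pi / tau+)^2 > 0, so r_k <= -c / (2 mu g) and
   r_k <= -c / (2 mu (mu - g)).  Part (3) is the upper bound on omega_k. *)

Lemma div_le_div_l (c x y : R) : 0 <= c -> 0 < x -> x <= y -> c / y <= c / x.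
Proof.
  intros Hc Hx Hxy. unfold Rdiv.
  apply Rmult_le_compat_l; [exact Hc | exact (Rinv_le_contravar x y Hx Hxy)].
Qed.

Lemma div_le_div_r (x y z : R) : 0 < z -> x <= y -> x / z <= y / z.
Proof.
  intros Hz Hxy. unfold Rdiv.
  apply Rmult_le_compat_r; [left; apply Rinv_0_lt_compat; exact Hz | exact Hxy].
Qed.

Lemma four_mul_le_sqr_add (a b : R) : 4 * a * b <= (a + b) ^ 2.
Proof. pose proof (pow2_ge_0 (a - b)). nra. Qed.

Lemma frequency_bounds (k : nat) (taum taup t w : R) :
  0 < taum -> taum <= t <= taup ->
  (2 * INR k + 1) * PI < w * t < (2 * INR k + 2) * PI ->
  PI / taup < w < (2 * INR k + 2) * PI / taum.
Proof.
  intros Htaum Ht Hwt.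
  pose proof PI_RGT_0. pose proof (pos_INR k).
  assert (Hw : 0 < w) by nra.
  split; [apply Rlt_div_l | apply Rlt_div_r]; nra.
Qed.

Lemma at_right_lt (a b : R) : a < b -> at_right a (fun x => a < x < b).
Proof.
  intros Hab. assert (Hd : 0 < b - a) by lra. exists (mkposreal _ Hd). intros x Hx Hax.
  change (Rabs (x - a) < b - a) in Hx. rewrite Rabs_right in Hx; lra.
Qed.

Lemma at_left_gt (a b : R) : a < b -> at_left b (fun x => a < x < b).
Proof.
  intros Hab. assert (Hd : 0 < b - a) by lra. exists (mkposreal _ Hd). intros x Hx Hxb.
  change (Rabs (x - b) < b - a) in Hx. rewrite Rabs_left in Hx; lra.
Qed.

Lemma filterlim_sub_at_right (a : R) :
  filterlim (fun x => x - a) (at_right a) (at_right 0).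
Proof.
  intros P [d Hd]. exists d. intros x Hx Hax. apply Hd; [|lra].
  change (Rabs (x - a - 0) < d). change (Rabs (x - a) < d) in Hx.
  rewrite Rminus_0_r. exact Hx.
Qed.

Lemma filterlim_rsub_at_left (b : R) :
  filterlim (fun x => b - x) (at_left b) (at_right 0).
Proof.
  intros P [d Hd]. exists d. intros x Hx Hxb. apply Hd; [|lra].
  change (Rabs (b - x - 0) < d). change (Rabs (x - b) < d) in Hx.
  rewrite Rminus_0_r, <- Rabs_Ropp, Ropp_minus_distr. exact Hx.
Qed.

Lemma filterlim_opp_div_at_right_0 (K : R) : 0 < K ->
  filterlim (fun x => - (K / x)) (at_right 0) (Rbar_locally m_infty).
Proof.
  intros HK.
  apply (filterlim_comp _ _ _ Rinv (fun y => - (K * y)) _ (Rbar_locally p_infty)).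
  - exact filterlim_Rinv_0_right.
  - apply (filterlim_comp _ _ _ (Rmult K) Ropp _ (Rbar_locally p_infty)).
    + replace (Rbar_locally p_infty) with (Rbar_locally (Rbar_mult K p_infty)) at 2.
      * exact (filterlim_Rbar_mult_l K p_infty).
      * simpl. destruct (Rle_dec 0 K) as [HK0|]; [|lra].
        destruct (Rle_lt_or_eq_dec 0 K HK0); [reflexivity | lra].
    + exact (filterlim_Rbar_opp p_infty).
Qed.

Lemma filterlim_m_infty_at_right_of_le (f : R -> R) (a K : R) : 0 < K ->
  at_right a (fun x => f x <= - (K / (x - a))) ->
  filterlim f (at_right a) (Rbar_locally m_infty).
Proof.
  intros HK Hf. apply (filterlim_le_m_infty (fun x => - (K / (x - a)))); [exact Hf|].
  apply (filterlim_comp _ _ _ (fun x => x - a) (fun y => - (K / y)) _ (at_right 0)).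
  - exact (filterlim_sub_at_right a).
  - exact (filterlim_opp_div_at_right_0 K HK).
Qed.

Lemma filterlim_m_infty_at_left_of_le (f : R -> R) (b K : R) : 0 < K ->
  at_left b (fun x => f x <= - (K / (b - x))) ->
  filterlim f (at_left b) (Rbar_locally m_infty).
Proof.
  intros HK Hf. apply (filterlim_le_m_infty (fun x => - (K / (b - x)))); [exact Hf|].
  apply (filterlim_comp _ _ _ (fun x => b - x) (fun y => - (K / y)) _ (at_right 0)).
  - exact (filterlim_rsub_at_left b).
  - exact (filterlim_opp_div_at_right_0 K HK).
Qed.

Section R_k.

Variables (mu : R) (omega : R -> R).

Lemma r_k_eq_opp (g : R) : 0 < g < mu ->
  r_k mu omega g = - ((omega g ^ 2 + g ^ 2) / (2 * g * (mu - g))).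
Proof. intros Hg. unfold r_k. field. lra. Qed.

Lemma Rabs_r_k (g : R) : 0 < g < mu ->
  Rabs (r_k mu omega g) = (omega g ^ 2 + g ^ 2) / (2 * g * (mu - g)).
Proof.
  intros Hg. rewrite r_k_eq_opp, Rabs_Ropp by exact Hg.
  apply Rabs_right, Rle_ge, Rdiv_le_0_compat; nra.
Qed.

Lemma sqr_div_le_Rabs_r_k (g : R) : 0 < g < mu ->
  omega g ^ 2 / (2 * g * (mu - g)) <= Rabs (r_k mu omega g).
Proof.
  intros Hg. rewrite Rabs_r_k by exact Hg.
  apply div_le_div_r; nra.
Qed.

Lemma Rabs_r_k_ge (g : R) : 0 < g < mu ->
  2 * (omega g / mu) ^ 2 <= Rabs (r_k mu omega g).
Proof.
  intros Hg. eapply Rle_trans; [|exact (sqr_div_le_Rabs_r_k g Hg)].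
  replace (2 * (omega g / mu) ^ 2) with (omega g ^ 2 / (mu ^ 2 / 2)) by (field; lra).
  pose proof (four_mul_le_sqr_add g (mu - g)).
  replace (g + (mu - g)) with mu in * by ring.
  apply div_le_div_l; [apply pow2_ge_0 | nra | lra].
Qed.

Lemma Rabs_r_k_le (B g : R) : 0 <= omega g <= B -> 0 < g < mu ->
  Rabs (r_k mu omega g) <= (B ^ 2 + g ^ 2) / (2 * g * (mu - g)).
Proof.
  intros Hw Hg. rewrite Rabs_r_k by exact Hg.
  apply div_le_div_r; [nra|].
  apply Rplus_le_compat_r, pow_incr. exact Hw.
Qed.

Hypothesis mu_pos : 0 < mu.
Variable c : R.
Hypothesis c_pos : 0 < c.
Hypothesis c_le_omega_sqr : forall g, 0 < g < mu -> c <= omega g ^ 2.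

Lemma r_k_le_opp_div (g : R) : 0 < g < mu ->
  r_k mu omega g <= - (c / (2 * g * (mu - g))).
Proof.
  intros Hg. rewrite r_k_eq_opp by exact Hg.
  apply Ropp_le_contravar, div_le_div_r; [nra|].
  pose proof (c_le_omega_sqr g Hg). nra.
Qed.

Lemma filterlim_r_k_at_right_0 :
  filterlim (r_k mu omega) (at_right 0) (Rbar_locally m_infty).
Proof.
  apply (filterlim_m_infty_at_right_of_le _ 0 (c / (2 * mu))).
  { apply Rdiv_lt_0_compat; lra. }
  apply (filter_imp (fun g => 0 < g < mu)); [|exact (at_right_lt 0 mu mu_pos)].
  intros g Hg. rewrite Rminus_0_r.
  eapply Rle_trans; [exact (r_k_le_opp_div g Hg)|].
  apply Ropp_le_contravar.
  replace (c / (2 * mu) / g) with (c / (2 * g * mu)) by (field; lra).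
  apply div_le_div_l; nra.
Qed.

Lemma filterlim_r_k_at_left_mu :
  filterlim (r_k mu omega) (at_left mu) (Rbar_locally m_infty).
Proof.
  apply (filterlim_m_infty_at_left_of_le _ mu (c / (2 * mu))).
  { apply Rdiv_lt_0_compat; lra. }
  apply (filter_imp (fun g => 0 < g < mu)); [|exact (at_left_gt 0 mu mu_pos)].
  intros g Hg.
  eapply Rle_trans; [exact (r_k_le_opp_div g Hg)|].
  apply Ropp_le_contravar.
  replace (c / (2 * mu) / (mu - g)) with (c / (2 * mu * (mu - g))) by (field; lra).
  apply div_le_div_l; nra.
Qed.

End R_k.

Theorem proposition5p5 (mu taum taup : R) (k : nat) (tau omega : R -> R)
  (hmu : 0 < mu) (htaum : 0 < taum) (htau : taum < taup)
  (htau_rng : forall g, 0 < g < mu -> taum <= tau g <= taup)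
  (homega : forall g, 0 < g < mu ->
     (2 * INR k + 1) * PI < omega g * tau g < (2 * INR k + 2) * PI) :
  (forall g, 0 < g < mu -> Rabs (r_k mu omega g) >= 2 * (omega g / mu) ^ 2) /\
  filterlim (r_k mu omega) (at_right 0) (Rbar_locally m_infty) /\
  filterlim (r_k mu omega) (at_left mu) (Rbar_locally m_infty) /\
  (forall g, 0 < g < mu ->
     Rabs (r_k mu omega g) <=
       ((2 * INR k + 2) ^ 2 * (PI / taum) ^ 2 + g ^ 2) / (2 * g * (mu - g))).
Proof.
  assert (Homega : forall g, 0 < g < mu ->
            PI / taup < omega g < (2 * INR k + 2) * PI / taum).
  { intros g Hg. exact (frequency_bounds k _ _ _ _ htaum (htau_rng g Hg) (homega g Hg)). }
  assert (Hlo_pos : 0 < PI / taup) by (apply Rdiv_lt_0_compat; [exact PI_RGT_0 | lra]).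
  assert (Hc : forall g, 0 < g < mu -> (PI / taup) ^ 2 <= omega g ^ 2).
  { intros g Hg. apply pow_incr. pose proof (Homega g Hg). lra. }
  split; [|split; [|split]].
  - intros g Hg. apply Rle_ge, Rabs_r_k_ge, Hg.
  - exact (filterlim_r_k_at_right_0 mu omega hmu _ (pow_lt _ 2 Hlo_pos) Hc).
  - exact (filterlim_r_k_at_left_mu mu omega hmu _ (pow_lt _ 2 Hlo_pos) Hc).
  - intros g Hg.
    replace ((2 * INR k + 2) ^ 2 * (PI / taum) ^ 2)
      with (((2 * INR k + 2) * PI / taum) ^ 2) by (field; lra).
    apply Rabs_r_k_le; [|exact Hg].
    pose proof (Homega g Hg). lra.
Qed.
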